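(* Let $H=(V,E)$ be a finite hypergraph and $A\subset E$. Let $V_1,\dots,V_N\subset V$ be the vertex sets of the connected components of $H|_A=(V_A,A)$, and for $k=1,\dots,N$ let $E_k=\{e\in A : e\subset V_k\}$. Define $$\mathcal{V}_k=\{\tilde V\subset V_k : \tilde V\neq\emptyset \text{ and } |\tilde V\cap e| \text{ is even for all } e\in E_k\},\qquad \mathcal{U}_k=\Big\{\prod_{v\in\tilde V}\Lambda_v : \tilde V\in\mathcal{V}_k\Big\},$$ $\mathcal{U}=\bigcup_{k=1}^N\mathcal{U}_k$ and $\mathcal{Q}=\{\Lambda_v : v\in V\setminus\bigcup_{k=1}^N V_k\}$. Then $\mathcal{O}_A=\mathcal{G}(\mathcal{U}\cup\mathcal{Q})$. Moreover, if $H$ is a graph, then $\mathcal{V}_k=\{V_k\}$ for all $k=1,\dots,N$.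
   Context: A hypergraph is $H=(V,E)$ with $V$ finite and $E\subset\mathcal{P}(V)$; it is a graph if every edge has exactly two elements. Fix enumerations $E=\{e_1,\dots,e_{|E|}\}$, $V=\{v_1,\dots,v_{|V|}\}$. For $w:E\to\mathbb{Z}_2$ the physical state is $|\psi_w\rangle=|w(e_1)\cdots w(e_{|E|})\rangle$ (qubits indexed by edges). $w$ is a parity weight if there is $f:V\to\mathbb{Z}_2$ with $\overline{w(e)}=\bigoplus_{v\in e}f(v)$ for all $e\in E$, where $\overline{p}=p\oplus1$; $\Pi$ is the set of $|\psi_w\rangle$ with $w$ a parity weight. For $v\in V$, the logical line operator $\Lambda_v:\Pi\to\Pi$ sends $|\psi_w\rangle$ to $|\psi_{w'}\rangle$ where $w'(e)=\overline{w(e)}$ if $v\in e$ and $w'(e)=w(e)$ otherwise. $\mathbb{\Lambda}=\{\Lambda_v : v\in V\}\cup\{\mathbb{1}\}$. For a set $F$ of maps $\Pi\to\Pi$, $\mathcal{G}(F)$ is the set of all finite compositions of elements of $F$, the empty composition being the identity $\mathbb{1}$. For $|\psi\rangle\in\Pi$ and non-empty $B\subset E$, $|\psi\rangle_B$ denotes the restriction to the qubits indexed by $B$. $\mathcal{O}_B=\{P\in\mathcal{G}(\mathbb{\Lambda}) : (P|\psi\rangle)_B=|\psi\rangle_B\ \forall|\psi\rangle\in\Pi\}$ for non-empty $B$, and $\mathcal{O}_\emptyset=\mathcal{G}(\mathbb{\Lambda})$. $H|_A=(V_A,A)$ with $V_A=\bigcup_{e\in A}e$; its connected components are with respect to edges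 in $A$. *)

From mathcomp Require Import all_boot.
Set Implicit Arguments. Unset Strict Implicit. Unset Printing Implicit Defensive.

Section Hypergraph.
Variables (V : finType) (E : {set {set V}}).

(* qubits are indexed by edges of H *)
Definition edge := {e : {set V} | e \in E}.
(* a weight w : E -> Z_2 (Z_2 = bool with xor); |psi_w> is identified with w *)
Definition state := edge -> bool.

Definition xorsum (S : {set V}) (f : V -> bool) : bool :=
  \big[addb/false]_(u in S) f u.

Definition parity_weight (w : state) : Prop :=
  exists f : V -> bool, forall e : edge, ~~ w e = xorsum (val e) f.

Definition Pi := {w : state | parity_weight w}.

Definition flipw (v : V) (w : state) : state :=
  fun e => if v \in val e then ~~ w e else w e.

Lemma xorsum_flip (S : {set V}) (f : V -> bool) (v : V) :
  xorsum S (fun u => if u == v then ~~ f u else f u) = (v \in S) (+) xorsum S f.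
Proof.
rewrite /xorsum; case: (boolP (v \in S)) => vS.
- rewrite (bigD1 v vS) /= eqxx [in RHS](bigD1 v vS) /=.
  rewrite (eq_bigr f); last by move=> u /andP [_ /negbTE ->].
  by case: (f v); case: (\big[addb/false]_(i in S | i != v) f i).
- apply: eq_bigr => u uS; case: eqP => // uv; by rewrite -uv uS in vS.
Qed.

Lemma flipw_parity (v : V) (w : state) :
  parity_weight w -> parity_weight (flipw v w).
Proof.
move=> [f Hf]; exists (fun u => if u == v then ~~ f u else f u) => e.
rewrite xorsum_flip -Hf /flipw; by case: (v \in val e); case: (w e).
Qed.

Definition Lam (v : V) : Pi -> Pi :=
  fun p => exist _ (flipw v (proj1_sig p)) (flipw_parity v (proj2_sig p)).

Definition Op := Pi -> Pi.

Definition gen (F : Op -> Prop) (P : Op) : Prop :=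
  exists s : seq Op, foldr (fun g acc => F g /\ acc) True s /\ P = foldr (fun g h => g \o h) id s.

Definition LamSet (g : Op) : Prop := (exists v, g = Lam v) \/ g = id.

(* (P|psi>)_B = |psi>_B : agreement on the qubits indexed by B *)
Definition restr_eq (B : {set {set V}}) (p q : Pi) : Prop :=
  forall e : edge, val e \in B -> proj1_sig p e = proj1_sig q e.

(* O_B ; for B empty this is G(Lambda) *)
Definition Obs (B : {set {set V}}) (P : Op) : Prop :=
  gen LamSet P /\ (B != set0 -> forall p : Pi, restr_eq B (P p) p).

(* product of Lambda_v over v in S (they commute, order irrelevant) *)
Definition prodLam (S : {set V}) : Op :=
  foldr (fun v g => Lam v \o g) id (enum S).

Definition is_graph : Prop := forall e, e \in E -> #|e| = 2.

End Hypergraph.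

Definition adjA (V : finType) (A : {set {set V}}) : rel V :=
  fun u v => [exists e in A, (u \in e) && (v \in e)].

Definition VA (V : finType) (A : {set {set V}}) : {set V} := \bigcup_(e in A) e.

Definition components (V : finType) (A : {set {set V}}) : {set {set V}} :=
  [set [set v | connect (adjA A) u v] | u in VA A].

Definition Ek (V : finType) (A : {set {set V}}) (C : {set V}) : {set {set V}} :=
  [set e in A | e \subset C].

Definition calV (V : finType) (A : {set {set V}}) (C : {set V}) : {set {set V}} :=
  [set S : {set V} | [&& S != set0, S \subset C &
                        [forall e in Ek A C, ~~ odd #|S :&: e|]]].

Definition calU (V : finType) (E A : {set {set V}}) (g : Op E) : Prop :=
  exists2 C, C \in components A & exists2 S, S \in calV A C & g = @prodLam V E S.

Definition calQ (V : finType) (E A : {set {set V}}) (g : Op E) : Prop :=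
  exists2 v, v \notin \bigcup_(C in components A) C & g = @Lam V E v.

From mathcomp Require Import all_boot.
From Stdlib Require Import FunctionalExtensionality ProofIrrelevance.

Set Implicit Arguments. Unset Strict Implicit. Unset Printing Implicit Defensive.

(* A composition of line operators flips the weight of each edge e by the
   parity of |T ∩ e|, where T is the set of vertices v whose Λ_v occurs an
   odd number of times, and it is determined by T.  It fixes the qubits of A
   exactly when T meets every edge of A in an even number of vertices.  Every
   edge of A lies inside one component V_k, so such a T splits into its traces
   on the V_k, each empty or in 𝒱_k, and a set of vertices outside all V_k;
   conversely every product of such pieces is even on A.  In a graph an even
   set meets each edge of V_k in 0 or 2 vertices, so a nonempty one is closed
   under adjacency and is all of V_k. *)

Section Xorsum.
Variable V : finType.
Implicit Types (S T : {set V}) (f g : V -> bool).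

Lemma eq_xorsum S f g : f =1 g -> xorsum S f = xorsum S g.
Proof. by move=> fg; apply: eq_bigr. Qed.

Lemma xorsum_false S : xorsum S (fun _ => false) = false.
Proof. exact: big1. Qed.

Lemma xorsum_addb S f g :
  xorsum S (fun u => f u (+) g u) = xorsum S f (+) xorsum S g.
Proof. exact: big_split. Qed.

Lemma xorsum_pred1 S v : xorsum S (fun u => u == v) = (v \in S).
Proof.
have := xorsum_flip S (fun _ => false) v; rewrite xorsum_false addbF => <-.
by apply: eq_xorsum => u; case: eqP.
Qed.

Lemma xorsum_mem S T : xorsum S (fun x => x \in T) = odd #|T :&: S|.
Proof.
have -> : #|T :&: S| = \sum_(u in S) (u \in T).
  rewrite -sum1_card [LHS]big_mkcond [RHS]big_mkcond /=.
  by apply: eq_bigr => u _; rewrite inE; case: (u \in T); case: (u \in S).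
rewrite (big_morph odd oddD (erefl : odd 0 = false)).
by apply: eq_bigr => u _; case: (u \in T).
Qed.

End Xorsum.

Lemma even_pair_sub (T : finType) (S e : {set T}) y :
  #|e| = 2 -> y \in S :&: e -> ~~ odd #|S :&: e| -> e \subset S.
Proof.
move=> e2 ySe even_Se.
have Se2 : #|S :&: e| = 2.
  have : #|S :&: e| <= 2 by rewrite -e2 subset_leq_card ?subsetIr.
  have : 0 < #|S :&: e| by apply/card_gt0P; exists y.
  by move: even_Se; case: #|S :&: e| => [|[|[|n]]].
by apply/setIidPr/eqP; rewrite eqEcard subsetIr Se2 e2 leqnn.
Qed.

Section LineOperators.
Variables (V : finType) (E : {set {set V}}).
Implicit Types (P Q g : Op E) (F G : Op E -> Prop) (S X : {set V}) (t s : V -> bool).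

Definition flips P t : Prop :=
  forall (p : Pi E) (e : edge E),
    proj1_sig (P p) e = xorsum (val e) t (+) proj1_sig p e.

Lemma flips_id : flips id (fun _ => false).
Proof. by move=> p e; rewrite xorsum_false. Qed.

Lemma flips_Lam v : flips (Lam v) (fun u => u == v).
Proof.
move=> p e; rewrite xorsum_pred1 /= /flipw.
by case: (v \in val e); case: (proj1_sig p e).
Qed.

Lemma flips_comp P Q t s :
  flips P t -> flips Q s -> flips (P \o Q) (fun u => t u (+) s u).
Proof. by move=> Pt Qs p e; rewrite /= Pt Qs xorsum_addb addbA. Qed.

Lemma eq_flips P t s : flips P t -> t =1 s -> flips P s.
Proof. by move=> Pt ts p e; rewrite Pt (eq_xorsum _ ts). Qed.

Lemma flips_inj P Q t : flips P t -> flips Q t -> P = Q.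
Proof.
move=> Pt Qt; apply: functional_extensionality => p.
have : proj1_sig (P p) = proj1_sig (Q p).
  by apply: functional_extensionality => e; rewrite Pt Qt.
case: (P p) (Q p) => [w w_par] [w' w'_par] /= eq_w.
by subst w'; rewrite (proof_irrelevance _ w_par w'_par).
Qed.

Lemma gen_id F : gen F id.
Proof. by exists [::]. Qed.

Lemma gen1 F g : F g -> gen F g.
Proof. by move=> Fg; exists [:: g]. Qed.

Lemma gen_comp F P Q : gen F P -> gen F Q -> gen F (P \o Q).
Proof.
have foldr_compE gs Q' : foldr (fun g h => g \o h) Q' gs
                         = foldr (fun g h => g \o h) id gs \o Q'.
  by elim: gs => //= g gs ->.
move=> [gs [Fgs ->]] [hs [Fhs ->]]; exists (gs ++ hs); split.
  by elim: gs Fgs => //= g gs IH [Fg Fgs]; split; auto.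
by rewrite foldr_cat [in RHS](foldr_compE gs).
Qed.

Lemma gen_ind F (R : Op E -> Prop) P :
  R id -> (forall g Q, F g -> R Q -> R (g \o Q)) -> gen F P -> R P.
Proof.
move=> R_id R_comp [gs [Fgs ->]].
by elim: gs Fgs => //= g gs IH [Fg Fgs]; apply: R_comp (IH Fgs).
Qed.

Lemma gen_trans F G P : (forall g, F g -> gen G g) -> gen F P -> gen G P.
Proof. by move=> FG; apply: gen_ind (gen_id G) _ => g Q /FG; apply: gen_comp. Qed.

Lemma gen_flips F (R : (V -> bool) -> Prop) P :
  R (fun _ => false) -> (forall t s, R t -> R s -> R (fun u => t u (+) s u)) ->
  (forall g, F g -> exists2 t, flips g t & R t) ->
  gen F P -> exists2 t, flips P t & R t.
Proof.
move=> R_false R_addb F_flips.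
apply: (@gen_ind F (fun P => exists2 t, flips P t & R t)).
  by exists (fun _ => false); [exact: flips_id |].
move=> g Q /F_flips [t gt Rt] [s Qs Rs].
by exists (fun u => t u (+) s u); [exact: flips_comp | exact: R_addb].
Qed.

Lemma gen_LamSet_flips P : gen (@LamSet V E) P -> exists t, flips P t.
Proof.
have LamSet_flips g : LamSet g -> exists2 t, flips g t & True.
  case=> [[v ->] | ->].
  - by exists (fun u => u == v); first exact: flips_Lam.
  - by exists (fun _ => false); first exact: flips_id.
by move=> /(gen_flips I (fun _ _ _ _ => I) LamSet_flips) [t Pt _]; exists t.
Qed.

Lemma flips_prodLam S : flips (@prodLam V E S) (fun x => x \in S).
Proof.
rewrite /prodLam; apply: (@eq_flips _ (fun u => odd (count_mem u (enum S)))).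
  elim: (enum S) => /= [|v vs IH]; first exact: flips_id.
  apply: eq_flips (flips_comp (flips_Lam v) IH) _ => u.
  by rewrite oddD eq_sym; case: (v == u).
by move=> u; rewrite count_uniq_mem ?enum_uniq // mem_enum; case: (u \in S).
Qed.

Lemma prodLam_setID S X :
  @prodLam V E S = prodLam (S :&: X) \o prodLam (S :\: X).
Proof.
apply: flips_inj (flips_prodLam S) _.
apply: eq_flips (flips_comp (flips_prodLam _) (flips_prodLam _)) _ => u.
by rewrite !inE; case: (u \in X); case: (u \in S).
Qed.

Lemma gen_prodLam F S : (forall v, v \in S -> F (Lam v)) -> gen F (@prodLam V E S).
Proof.
move=> F_S; rewrite /prodLam.
have : {subset enum S <= S} by move=> v; rewrite mem_enum.
elim: (enum S) => /= [|v vs IH] sub_vs; first exact: gen_id.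
apply: gen_comp; first by apply/gen1/F_S/sub_vs; rewrite inE eqxx.
by apply: IH => u u_vs; apply: sub_vs; rewrite inE u_vs orbT.
Qed.

End LineOperators.

Section Components.
Variables (V : finType) (A : {set {set V}}).

Definition component_of (u : V) : {set V} := [set v | connect (adjA A) u v].

Lemma adjA_sym : symmetric (adjA A).
Proof.
move=> x y.
by apply/existsP/existsP => -[e /and3P [eA xe ye]]; exists e; rewrite eA xe ye.
Qed.

Lemma componentsP C :
  reflect (exists2 u, u \in VA A & C = component_of u) (C \in components A).
Proof. exact: imsetP. Qed.

Lemma mem_component_of u : u \in component_of u.
Proof. by rewrite inE connect0. Qed.

Lemma component_of_in u : u \in VA A -> component_of u \in components A.
Proof. by move=> uA; apply/componentsP; exists u. Qed.

Lemma component_of_VA u v : v \in component_of u -> (v \in VA A) = (u \in VA A).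
Proof.
rewrite inE => /closed_connect-> // x y /existsP [e /and3P [eA xe ye]].
by apply/idP/idP => _; apply/bigcupP; exists e.
Qed.

Lemma cover_components : \bigcup_(C in components A) C = VA A.
Proof.
apply/setP => v; apply/bigcupP/idP => [[C /componentsP [u uA ->] vC] | vA].
  by rewrite (component_of_VA vC).
by exists (component_of v); [exact: component_of_in | exact: mem_component_of].
Qed.

Lemma component_ofE C v : C \in components A -> v \in C -> C = component_of v.
Proof.
move=> /componentsP [u _ ->]; rewrite inE => cuv; apply/setP => w; rewrite !inE.
apply/idP/idP; last exact: connect_trans.
by apply: connect_trans; rewrite (sym_connect_sym adjA_sym).
Qed.

Lemma edge_sub_component u e x :
  e \in A -> x \in e -> x \in component_of u -> e \subset component_of u.
Proof.
move=> eA xe; rewrite inE => cux; apply/subsetP => y ye; rewrite inE.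
by apply: connect_trans cux (connect1 _); apply/existsP; exists e; rewrite eA xe ye.
Qed.

End Components.

Section Stabilizer.
Variables (V : finType) (E A : {set {set V}}).
Hypothesis subAE : A \subset E.
Implicit Types (P g : Op E) (S : {set V}) (t s : V -> bool).

Local Notation gens := (fun g : Op E => calU A g \/ calQ A g).

Definition even_on (B : {set {set V}}) t : Prop :=
  forall e, e \in B -> xorsum e t = false.

Lemma even_on_mem B S :
  even_on B (fun x => x \in S) <-> forall e, e \in B -> ~~ odd #|S :&: e|.
Proof.
by split=> evS e eB; [rewrite -xorsum_mem evS | rewrite xorsum_mem (negbTE (evS e eB))].
Qed.

Lemma restr_eq_even P t :
  flips P t -> (forall p, restr_eq A (P p) p) <-> even_on A t.
Proof.
move=> Pt; split=> [fixA e eA | evt p e eA]; last by rewrite Pt evt.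
pose w : state E := fun _ => true.
have w_par : parity_weight w by exists (fun _ => false) => e'; rewrite xorsum_false.
have := fixA (exist _ w w_par) (exist _ e (subsetP subAE _ eA)) eA.
by rewrite Pt /=; case: (xorsum e t).
Qed.

Lemma calU_flips_even g : calU A g -> exists2 t, flips g t & even_on A t.
Proof.
move=> [C /componentsP [u _ ->] [S]]; rewrite inE => /and3P [_ SC /forall_inP evS] ->.
exists (fun x => x \in S); first exact: flips_prodLam.
apply/even_on_mem => e eA; case: (boolP (e \subset component_of A u)) => eC.
  by apply: evS; rewrite inE eA eC.
suff -> : S :&: e = set0 by rewrite cards0.
apply/setP => x; rewrite !inE; apply/negP => /andP [xS xe].
by rewrite (edge_sub_component eA xe (subsetP SC _ xS)) in eC.
Qed.

Lemma calQ_flips_even g : calQ A g -> exists2 t, flips g t & even_on A t.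
Proof.
move=> [v]; rewrite cover_components => vA ->.
exists (fun u => u == v); first exact: flips_Lam.
by move=> e eA; rewrite xorsum_pred1; apply: contraNF vA => ve; apply/bigcupP; exists e.
Qed.

Lemma gen_calUQ_Obs P : gen gens P -> Obs A P.
Proof.
move=> PUQ; split.
  apply: gen_trans PUQ => g [[C _ [S _ ->]] | [v _ ->]].
  - by apply: gen_prodLam => v _; left; exists v.
  - by apply: gen1; left; exists v.
move=> _; have [t Pt evt] : exists2 t, flips P t & even_on A t.
  apply: gen_flips PUQ => [e _ | t s evt evs e eA | g []].
  - exact: xorsum_false.
  - by rewrite xorsum_addb evt ?evs.
  - exact: calU_flips_even.
  - exact: calQ_flips_even.
exact: (restr_eq_even Pt).2.
Qed.

Lemma Obs_flips_even P : Obs A P -> exists2 t, flips P t & even_on A t.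
Proof.
move=> [/gen_LamSet_flips [t Pt] fixA]; exists t => //.
have [A0 | An] := eqVneq A set0; first by move=> e; rewrite A0 inE.
exact: (restr_eq_even Pt).1 (fixA An).
Qed.

Lemma even_on_setD_component S u :
  even_on A (fun x => x \in S) -> even_on A (fun x => x \in S :\: component_of A u).
Proof.
move=> /even_on_mem evS; apply/even_on_mem => e eA.
have [eC | eNC] := boolP (e \subset component_of A u).
  suff -> : (S :\: component_of A u) :&: e = set0 by rewrite cards0.
  apply/eqP; rewrite -subset0; apply/subsetP => x /setIP [/setDP [_ xNC] xe].
  by rewrite (subsetP eC _ xe) in xNC.
suff -> : (S :\: component_of A u) :&: e = S :&: e by apply: evS.
apply/setP => x; rewrite !in_setI in_setD.
case xe: (x \in e); rewrite ?andbF // !andbT.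
case xC: (x \in component_of A u) => //=.
by rewrite (edge_sub_component eA xe xC) in eNC.
Qed.

Lemma gen_prodLam_component S u :
  even_on A (fun x => x \in S) -> u \in S ->
  gen gens (prodLam (S :&: component_of A u)).
Proof.
move=> /even_on_mem evS uS; have [uA | uNA] := boolP (u \in VA A).
  apply: gen1; left; exists (component_of A u); first exact: component_of_in.
  exists (S :&: component_of A u) => //; rewrite inE subsetIr /=.
  apply/andP; split; first by apply/set0Pn; exists u; rewrite inE uS mem_component_of.
  apply/forall_inP => e; rewrite inE => /andP [eA /setIidPr eC].
  by rewrite -setIA eC evS.
apply: gen_prodLam => v /setIP [_ vC]; right; exists v => //.
by rewrite cover_components (component_of_VA vC).
Qed.

Lemma gen_prodLam_even S : even_on A (fun x => x \in S) -> gen gens (prodLam S).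
Proof.
elim: {S}_.+1 {-2}S (ltnSn #|S|) => // n IH S ltSn evS.
have [-> | [u uS]] := set_0Vmem S; first by rewrite /prodLam enum_set0; apply: gen_id.
rewrite (prodLam_setID E S (component_of A u)); apply: gen_comp.
  exact: gen_prodLam_component.
apply: IH (even_on_setD_component u evS); rewrite -ltnS (leq_trans _ ltSn) //.
rewrite cardsD ltnS ltn_subrL; apply/andP; split; apply/card_gt0P.
  by exists u; rewrite inE uS mem_component_of.
by exists u.
Qed.

Lemma Obs_gen_calUQ P : Obs A P -> gen gens P.
Proof.
move=> /Obs_flips_even [t Pt evt].
have -> : P = prodLam [set u | t u].
  by apply: flips_inj Pt (eq_flips (flips_prodLam _) _) => u; rewrite inE.
apply: gen_prodLam_even => e eA.
by rewrite -(evt e eA); apply: eq_xorsum => u; rewrite inE.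
Qed.

End Stabilizer.

Section Graphs.
Variables (V : finType) (E A : {set {set V}}).
Hypotheses (subAE : A \subset E) (graphE : is_graph E).

Lemma calV_adj_closed u S y z :
  S \in calV A (component_of A u) -> y \in S -> adjA A y z -> z \in S.
Proof.
rewrite inE => /and3P [_ SC /forall_inP evS] yS /existsP [e /and3P [eA ye ze]].
have eC := edge_sub_component eA ye (subsetP SC _ yS).
have e2 := graphE (subsetP subAE _ eA).
have Se : e \subset S.
  apply: (even_pair_sub e2 (y := y)); first by rewrite inE yS ye.
  by apply: evS; rewrite inE eA eC.
exact: subsetP Se _ ze.
Qed.

Lemma calV_graph C : C \in components A -> calV A C = [set C].
Proof.
move=> compC; have /componentsP [u _ defC] := compC.
apply/setP => S; rewrite in_set1; apply/idP/eqP => [VS | ->].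
  move: (VS); rewrite inE => /and3P [/set0Pn [x xS] SC _].
  have S_closed : closed (adjA A) S.
    rewrite defC in VS; move=> y z yz; apply/idP/idP => [yS | zS].
      exact: calV_adj_closed VS yS yz.
    by apply: calV_adj_closed VS zS _; rewrite adjA_sym.
  apply/eqP; rewrite eqEsubset SC (component_ofE compC (subsetP SC _ xS)).
  by apply/subsetP => v; rewrite inE => /(closed_connect S_closed) <-.
rewrite inE subxx; apply/andP; split.
  by apply/set0Pn; exists u; rewrite defC mem_component_of.
apply/forall_inP => e; rewrite inE => /andP [eA /setIidPr ->].
by rewrite (graphE (subsetP subAE _ eA)).
Qed.

End Graphs.

Theorem lemma1 (V : finType) (E A : {set {set V}}) (hA : A \subset E) :
  (forall P : Op E,
      Obs A P <-> gen (fun g => calU A g \/ calQ A g) P)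
  /\ (is_graph E -> forall C, C \in components A -> calV A C = [set C]).
Proof.
split=> [P | graphE C compC]; last exact: (calV_graph hA graphE compC).
by split; [exact: Obs_gen_calUQ | exact: gen_calUQ_Obs].
Qed.
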